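(* Suppose that $G = \left( \begin{bmatrix} m & k \end{bmatrix}, \eta, u \right)$ is a conditional of $F= \left( \begin{bmatrix} f \\ g \end{bmatrix}, \begin{bmatrix} \alpha & \beta \\ \beta^\dagger & \delta \end{bmatrix}, \begin{bmatrix} s \\ t \end{bmatrix} \right)$. Then the following equalities hold: \begin{align*} k = g - m \circ f &\quad & m \circ \alpha = \beta^\dagger &\quad & \eta = \delta - m \circ \beta &\quad & u = t - m\circ s \end{align*}
   Context: Let $(\mathbb{X}, \dagger)$ be a dagger additive category (a dagger category enriched in abelian groups with additive dagger and finite biproducts satisfying $\pi_j^\dagger = \iota_j$; maps between biproducts are written as matrices and the dagger acts as conjugate transpose) and fix an object $X$. A map $p$ is $\dagger$-positive if $p = \phi^\dagger \circ \phi$ for some $\phi$. The Gauss construction $\mathfrak{G}\left[ (\mathbb{X}, \dagger) \right]_X$ is the Markov category with the objects of $\mathbb{X}$, maps $A \to B$ the triples $(f,p,x)$ with $f: A \to B$, $p: B \to B$ $\dagger$-positive, $x: X \to B$; identities $(\mathsf{id}_A,0,0)$; composition $(g,q,y) \circ (f,p,x) = (g \circ f, q + g \circ p \circ g^\dagger, y + g \circ x)$; $A \otimes B = A \oplus B$, $(f,p,x) \otimes (g,q,y) = \left(f \oplus g, p \oplus q, \begin{bmatrix} x \\ y \end{bmatrix}\right)$; identity maps $\mathsf{Id}_A = (\mathsf{id}_A,0,0)$, copy $\mathsf{copy}_A = \left(\begin{bmatrix} \mathsf{id}_A \\ \mathsf{id}_A \end{bmatrix}, 0, 0\right)$, delete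 $\mathsf{del}_A = (0,0,0): A \to \mathsf{0}$. Here $F: A \to B \otimes C$ is a map of $\mathfrak{G}\left[ (\mathbb{X}, \dagger) \right]_X$ with $f: A \to B$, $g: A \to C$, $\alpha: B \to B$, $\beta: C \to B$, $\delta: C \to C$, $s: X \to B$, $t: X \to C$ (the second component is $\dagger$-positive, which forces its lower-left entry to be $\beta^\dagger$), and $G: B \otimes A \to C$ has $m: B \to C$, $k: A \to C$, $\eta: C \to C$ $\dagger$-positive, $u: X \to C$. $G$ is a conditional of $F$ if $(\mathsf{Id}_B \otimes G) \circ (\mathsf{copy}_B \otimes \mathsf{Id}_A) \circ (\mathsf{Id}_B \otimes \mathsf{del}_C \otimes \mathsf{Id}_A) \circ (F \otimes \mathsf{Id}_A) \circ \mathsf{copy}_A = F$. *)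

From HB Require Import structures.
From mathcomp Require Import all_boot all_algebra.
Set Implicit Arguments. Unset Strict Implicit. Unset Printing Implicit Defensive.
Import GRing.Theory.
Local Open Scope ring_scope.

Record DagAddCat := {
  Ob : Type;
  HomC : Ob -> Ob -> zmodType;
  comp : forall A B C : Ob, HomC B C -> HomC A B -> HomC A C;
  idm : forall A : Ob, HomC A A;
  dag : forall A B : Ob, HomC A B -> HomC B A;
  compA : forall A B C D (h : HomC C D) (g : HomC B C) (f : HomC A B),
      comp h (comp g f) = comp (comp h g) f;
  comp1m : forall A B (f : HomC A B), comp (idm B) f = f;
  compm1 : forall A B (f : HomC A B), comp f (idm A) = f;
  compDl : forall A B C (g1 g2 : HomC B C) (f : HomC A B),
      comp (g1 + g2) f = comp g1 f + comp g2 f;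
  compDr : forall A B C (g : HomC B C) (f1 f2 : HomC A B),
      comp g (f1 + f2) = comp g f1 + comp g f2;
  dagK : forall A B (f : HomC A B), dag (dag f) = f;
  dag_comp : forall A B C (g : HomC B C) (f : HomC A B),
      dag (comp g f) = comp (dag f) (dag g);
  dag_id : forall A, dag (idm A) = idm A;
  dagD : forall A B (f g : HomC A B), dag (f + g) = dag f + dag g;
  zeroOb : Ob;
  id_zero : idm zeroOb = 0;
  oplus : Ob -> Ob -> Ob;
  pi1 : forall A B, HomC (oplus A B) A;
  pi2 : forall A B, HomC (oplus A B) B;
  iota1 : forall A B, HomC A (oplus A B);
  iota2 : forall A B, HomC B (oplus A B);
  pi1iota1 : forall A B, comp (pi1 A B) (iota1 A B) = idm A;
  pi2iota2 : forall A B, comp (pi2 A B) (iota2 A B) = idm B;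
  pi1iota2 : forall A B, comp (pi1 A B) (iota2 A B) = 0;
  pi2iota1 : forall A B, comp (pi2 A B) (iota1 A B) = 0;
  biprod_id : forall A B,
      comp (iota1 A B) (pi1 A B) + comp (iota2 A B) (pi2 A B) = idm (oplus A B);
  dag_pi1 : forall A B, dag (pi1 A B) = iota1 A B;
  dag_pi2 : forall A B, dag (pi2 A B) = iota2 A B
}.

Arguments comp {d A B C}.
Arguments idm {d}.
Arguments dag {d A B}.
Arguments zeroOb {d}.
Arguments oplus {d}.
Arguments pi1 {d A B}.
Arguments pi2 {d A B}.
Arguments iota1 {d A B}.
Arguments iota2 {d A B}.

Notation "g \oc f" := (comp g f) (at level 40, left associativity).

Section Matrices.
Variable C : DagAddCat.
Implicit Types A B D E : Ob C.

Definition mpair A B D (f : HomC A B) (g : HomC A D) : HomC A (oplus B D) :=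
  iota1 \oc f + iota2 \oc g.
Definition mcopair B D E (f : HomC B E) (g : HomC D E) : HomC (oplus B D) E :=
  f \oc pi1 + g \oc pi2.
Definition msum A B D E (f : HomC A B) (g : HomC D E) : HomC (oplus A D) (oplus B E) :=
  iota1 \oc f \oc pi1 + iota2 \oc g \oc pi2.
(* block matrix [[a b];[c d]] : A (+) D -> B (+) E *)
Definition mblock A B D E (a : HomC A B) (b : HomC D B) (c : HomC A E) (d : HomC D E)
  : HomC (oplus A D) (oplus B E) :=
  iota1 \oc a \oc pi1 + iota1 \oc b \oc pi2 + iota2 \oc c \oc pi1 + iota2 \oc d \oc pi2.

Definition dpositive B (p : HomC B B) : Prop :=
  exists (D : Ob C) (phi : HomC B D), p = dag phi \oc phi.
End Matrices.

Arguments mpair {C A B D}.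
Arguments mcopair {C B D E}.
Arguments msum {C A B D E}.
Arguments mblock {C A B D E}.
Arguments dpositive {C B}.

Section Gauss.
Variables (C : DagAddCat) (X : Ob C).

Record GMap (A B : Ob C) := mkG {
  gf : HomC A B;
  gp : HomC B B;
  gx : HomC X B
}.

Definition is_gauss A B (F : GMap A B) : Prop := dpositive (gp F).

Definition gcomp A B D (G : GMap B D) (F : GMap A B) : GMap A D :=
  mkG (gf G \oc gf F) (gp G + gf G \oc gp F \oc dag (gf G)) (gx G + gf G \oc gx F).

Definition gtens A B D E (F : GMap A B) (G : GMap D E) : GMap (oplus A D) (oplus B E) :=
  mkG (msum (gf F) (gf G)) (msum (gp F) (gp G)) (mpair (gx F) (gx G)).

Definition gId A : GMap A A := mkG (idm A) 0 0.
Definition gcopy A : GMap A (oplus A A) := mkG (mpair (idm A) (idm A)) 0 0.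
Definition gdel A : GMap A zeroOb := mkG 0 0 0.

Definition grunitor B : GMap (oplus B zeroOb) B := mkG pi1 0 0.
Definition gassoc B D E : GMap (oplus (oplus B D) E) (oplus B (oplus D E)) :=
  mkG (mpair (pi1 \oc pi1) (mpair (pi2 \oc pi1) pi2)) 0 0.

(* G : B (x) A -> C is a conditional of F : A -> B (x) C :
   (Id_B (x) G) o (copy_B (x) Id_A) o (Id_B (x) del_C (x) Id_A) o (F (x) Id_A) o copy_A = F,
   with the (implicit in the paper) associator and unitor written explicitly. *)
Definition is_conditional A B D (F : GMap A (oplus B D)) (G : GMap (oplus B A) D) : Prop :=
  gcomp (gtens (gId B) G)
   (gcomp (gassoc B B A)
    (gcomp (gtens (gcopy B) (gId A))
     (gcomp (gtens (grunitor B) (gId A))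
      (gcomp (gtens (gtens (gId B) (gdel D)) (gId A))
       (gcomp (gtens F (gId A)) (gcopy A)))))) = F.
End Gauss.

Arguments mkG {C X A B}.
Arguments gf {C X A B}.
Arguments gp {C X A B}.
Arguments gx {C X A B}.
Arguments is_conditional {C X A B D}.

(* Every structural map in the defining equation of a conditional (copy, delete, unitor,
   associator) is deterministic, i.e. has zero covariance and zero mean, so the left-hand side
   collapses to (Id_B (x) G) after a single pushforward of the graph (F (x) Id_A) o copy_A.
   Computing with block matrices, the composite is
     ([f; m f + k], [[alpha, alpha m^dag]; [m alpha, eta + m alpha m^dag]], [s; u + m s]),
   and comparing entries with F gives the four identities (with beta = alpha m^dag turning
   m alpha m^dag into m beta). *)
From Pilot Require Import Defs.
From mathcomp Require Import all_boot all_algebra.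
Import GRing.Theory.
Local Open Scope ring_scope.

Set Implicit Arguments.
Unset Strict Implicit.
Unset Printing Implicit Defensive.

Section AdditiveCategory.
Variable C : DagAddCat.
Implicit Types A B D E : Ob C.

Lemma comp0m A B D (f : HomC A B) : (0 : HomC B D) \oc f = 0.
Proof. by apply: (addrI (0 \oc f)); rewrite -compDl !addr0. Qed.

Lemma compm0 A B D (g : HomC B D) : g \oc (0 : HomC A B) = 0.
Proof. by apply: (addrI (g \oc 0)); rewrite -compDr !addr0. Qed.

Lemma dag0 A B : dag (0 : HomC A B) = 0.
Proof. by apply: (addrI (dag (0 : HomC A B))); rewrite -dagD !addr0. Qed.

Lemma dag_iota1 A B : dag (@iota1 C A B) = pi1.
Proof. by rewrite -dag_pi1 dagK. Qed.

Lemma dag_iota2 A B : dag (@iota2 C A B) = pi2.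
Proof. by rewrite -dag_pi2 dagK. Qed.
End AdditiveCategory.

Section BlockMatrices.
Variable C : DagAddCat.
Implicit Types A B D E : Ob C.

Lemma pi1_mpair A B D (x : HomC A B) (y : HomC A D) : pi1 \oc mpair x y = x.
Proof. by rewrite /mpair compDr !Defs.compA pi1iota1 pi1iota2 comp1m comp0m addr0. Qed.

Lemma pi2_mpair A B D (x : HomC A B) (y : HomC A D) : pi2 \oc mpair x y = y.
Proof. by rewrite /mpair compDr !Defs.compA pi2iota1 pi2iota2 comp1m comp0m add0r. Qed.

Lemma mcopair_iota1 B D E (a : HomC B E) (b : HomC D E) : mcopair a b \oc iota1 = a.
Proof. by rewrite /mcopair compDl -!Defs.compA pi1iota1 pi2iota1 compm1 compm0 addr0. Qed.

Lemma mcopair_iota2 B D E (a : HomC B E) (b : HomC D E) : mcopair a b \oc iota2 = b.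
Proof. by rewrite /mcopair compDl -!Defs.compA pi1iota2 pi2iota2 compm1 compm0 add0r. Qed.

Lemma mpair_inj A B D (x x' : HomC A B) (y y' : HomC A D) :
  mpair x y = mpair x' y' -> x = x' /\ y = y'.
Proof.
move=> eq_xy; split; [rewrite -(pi1_mpair x y) | rewrite -(pi2_mpair x y)];
  by rewrite eq_xy ?pi1_mpair ?pi2_mpair.
Qed.

Lemma mcopair_inj B D E (a a' : HomC B E) (b b' : HomC D E) :
  mcopair a b = mcopair a' b' -> a = a' /\ b = b'.
Proof.
move=> eq_ab; split; [rewrite -(mcopair_iota1 a b) | rewrite -(mcopair_iota2 a b)];
  by rewrite eq_ab ?mcopair_iota1 ?mcopair_iota2.
Qed.

Lemma mpair_comp A A' B D (x : HomC A B) (y : HomC A D) (h : HomC A' A) :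
  mpair x y \oc h = mpair (x \oc h) (y \oc h).
Proof. by rewrite /mpair compDl -!Defs.compA. Qed.

Lemma comp_mcopair B D E E' (a : HomC B E) (b : HomC D E) (h : HomC E E') :
  h \oc mcopair a b = mcopair (h \oc a) (h \oc b).
Proof. by rewrite /mcopair compDr !Defs.compA. Qed.

Lemma mcopair_mpair A B D E (a : HomC B E) (b : HomC D E) (x : HomC A B) (y : HomC A D) :
  mcopair a b \oc mpair x y = a \oc x + b \oc y.
Proof. by rewrite /mcopair compDl -!Defs.compA pi1_mpair pi2_mpair. Qed.

Lemma dag_mpair A B D (x : HomC A B) (y : HomC A D) :
  dag (mpair x y) = mcopair (dag x) (dag y).
Proof. by rewrite /mpair /mcopair dagD !dag_comp dag_iota1 dag_iota2. Qed.

Lemma dag_mcopair B D E (a : HomC B E) (b : HomC D E) :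
  dag (mcopair a b) = mpair (dag a) (dag b).
Proof. by rewrite /mpair /mcopair dagD !dag_comp dag_pi1 dag_pi2. Qed.

Lemma mpairD A B D (x x' : HomC A B) (y y' : HomC A D) :
  mpair x y + mpair x' y' = mpair (x + x') (y + y').
Proof. by rewrite /mpair !compDr addrACA. Qed.

Lemma mcopairD B D E (a a' : HomC B E) (b b' : HomC D E) :
  mcopair a b + mcopair a' b' = mcopair (a + a') (b + b').
Proof. by rewrite /mcopair !compDl addrACA. Qed.

Lemma mpair0 A B D : mpair (0 : HomC A B) (0 : HomC A D) = 0.
Proof. by rewrite /mpair !compm0 addr0. Qed.

Lemma mcopair0 B D E : mcopair (0 : HomC B E) (0 : HomC D E) = 0.
Proof. by rewrite /mcopair !comp0m addr0. Qed.

Lemma mcopair_mpair_exchange B D E E' (a : HomC B E) (b : HomC D E) (c : HomC B E')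
    (e : HomC D E') :
  mcopair (mpair a c) (mpair b e) = mpair (mcopair a b) (mcopair c e).
Proof. by rewrite /mcopair /mpair !compDl !compDr !Defs.compA addrACA. Qed.

Lemma pi1E A B : @pi1 C A B = mcopair (idm A) 0.
Proof. by rewrite /mcopair comp1m comp0m addr0. Qed.

Lemma pi2E A B : @pi2 C A B = mcopair 0 (idm B).
Proof. by rewrite /mcopair comp1m comp0m add0r. Qed.

Lemma msumE A B D E (a : HomC A B) (b : HomC D E) :
  msum a b = mpair (mcopair a 0) (mcopair 0 b).
Proof. by rewrite /msum /mpair /mcopair !comp0m addr0 add0r !Defs.compA. Qed.

Lemma mblockE A B D E (a : HomC A B) (b : HomC D B) (c : HomC A E) (e : HomC D E) :
  mblock a b c e = mpair (mcopair a b) (mcopair c e).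
Proof. by rewrite /mblock /mpair /mcopair !compDr !Defs.compA !addrA. Qed.
End BlockMatrices.

(* Rewrites every map into (out of) a biproduct to an [mpair] ([mcopair]) of maps between the
   summands. [autorewrite] matches syntactically, which is much faster here than [rewrite]'s
   matching up to unfolding; [addr0] and [add0r] need the latter, since they reach the additive
   structure of a hom-set through a different (convertible) chain of instances. *)
#[local] Hint Rewrite pi1E pi2E msumE mblockE mpair_comp comp_mcopair mcopair_mpair
  mcopair_mpair_exchange dag_mpair dag_mcopair mpairD mcopairD mpair0 mcopair0
  dag_id dag0 comp1m compm1 comp0m compm0 : block_mx.

Ltac block_simpl := repeat progress (autorewrite with block_mx; rewrite ?addr0 ?add0r).

Section DeterministicMaps.
Variables (C : DagAddCat) (X : Ob C).

Local Notation gdet h := (@mkG C X _ _ h 0 0).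

Lemma gcomp_detl A B D (h : HomC B D) (F : GMap X A B) :
  gcomp (gdet h) F = mkG (h \oc gf F) (h \oc gp F \oc dag h) (h \oc gx F).
Proof. by rewrite /gcomp /= !add0r. Qed.

Lemma gcomp_detr A B D (h : HomC A B) (G : GMap X B D) :
  gcomp G (gdet h) = mkG (gf G \oc h) (gp G) (gx G).
Proof. by rewrite /gcomp /= compm0 comp0m compm0 !addr0. Qed.

Lemma gcomp_detA A B D E (h : HomC D E) (h' : HomC B D) (F : GMap X A B) :
  gcomp (gdet h) (gcomp (gdet h') F) = gcomp (gdet (h \oc h')) F.
Proof. by rewrite !gcomp_detl /= dag_comp !Defs.compA. Qed.

Lemma gtens_det A B D E (h : HomC A B) (h' : HomC D E) :
  gtens (gdet h) (gdet h') = gdet (msum h h').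
Proof. by rewrite /gtens /=; block_simpl. Qed.
End DeterministicMaps.

Lemma marginal_copyE (C : DagAddCat) (A B D : Ob C) :
  mpair (pi1 \oc pi1) (mpair (pi2 \oc pi1) pi2)
    \oc msum (mpair (idm B) (idm B)) (idm A) \oc msum pi1 (idm A)
    \oc msum (msum (idm B) (0 : HomC D zeroOb)) (idm A)
  = mpair (pi1 \oc pi1) (mpair (pi1 \oc pi1) pi2).
Proof. by block_simpl. Qed.

Lemma is_conditional_block_eqs (C : DagAddCat) (X A B D : Ob C)
    (f : HomC A B) (g : HomC A D) (alpha : HomC B B) (beta : HomC D B) (gamma : HomC B D)
    (delta : HomC D D) (s : HomC X B) (t : HomC X D)
    (m : HomC B D) (k : HomC A D) (eta : HomC D D) (u : HomC X D) :
  is_conditional (mkG (mpair f g) (mblock alpha beta gamma delta) (mpair s t))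
                 (mkG (mcopair m k) eta u) ->
  [/\ g = m \oc f + k, beta = alpha \oc dag m, gamma = m \oc alpha,
      delta = eta + m \oc alpha \oc dag m & t = u + m \oc s].
Proof.
rewrite /is_conditional /gId /gcopy /gdel /grunitor /gassoc !gtens_det !gcomp_detA.
rewrite gcomp_detr gcomp_detl marginal_copyE /gcomp /gtens /=.
case; block_simpl.
move=> /mpair_inj[_ eq_g] /mpair_inj[/mcopair_inj[_ eq_beta] /mcopair_inj[eq_gamma eq_delta]].
by move=> /mpair_inj[_ eq_t].
Qed.

Theorem mainTheorem6 (Cat : DagAddCat) (X A B C : Ob Cat)
  (f : HomC A B) (g : HomC A C) (alpha : HomC B B) (beta : HomC C B) (delta : HomC C C)
  (s : HomC X B) (t : HomC X C)
  (m : HomC B C) (k : HomC A C) (eta : HomC C C) (u : HomC X C) :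
  dpositive (mblock alpha beta (dag beta) delta) ->
  dpositive eta ->
  is_conditional
    (mkG (X := X) (mpair f g) (mblock alpha beta (dag beta) delta) (mpair s t))
    (mkG (X := X) (mcopair m k) eta u) ->
  k = g - m \oc f /\ m \oc alpha = dag beta /\
  eta = delta - m \oc beta /\ u = t - m \oc s.
Proof.
move=> _ _ /is_conditional_block_eqs[eq_g eq_beta eq_gamma eq_delta eq_t].
split; first by rewrite eq_g [m \oc f + k]addrC addrK.
split; first by rewrite eq_gamma.
split; first by rewrite eq_delta eq_beta Defs.compA addrK.
by rewrite eq_t addrK.
Qed.
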